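(* (i) If a predominated graph $(G,D)$ is MBD Dominator-critical and $D'\subseteq V(G)$ is a proper subset or a proper superset of $D$, then $(G,D')$ is not MBD Dominator-critical. (ii) For a graph $G$, there exists $D\subseteq V(G)$ such that $(G,D)$ is MBD Dominator-critical if and only if Staller wins the MBD game on $(G,\emptyset)$.
   Context: A predominated graph is a pair $(G,D)$ with $G$ a finite simple graph and $D\subseteq V(G)$. In the MBD game on $(G,D)$, Staller and Dominator alternately claim unclaimed vertices of $V(G)$ (including vertices of $D$), Staller first, until all are claimed; Staller wins if she claims all of $N_G[v]$ for some $v\in V(G)\setminus D$, Dominator wins otherwise. $(G,D)$ is MBD Dominator-critical if $D\neq\emptyset$, Dominator wins on $(G,D)$, and Staller wins on $(G,D\setminus\{v\})$ for every $v\in D$. *)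

From mathcomp Require Import all_boot.
Set Implicit Arguments. Unset Strict Implicit. Unset Printing Implicit Defensive.

(* A finite simple graph: vertex type T : finType, adjacency e : rel T,
   assumed symmetric and irreflexive (hypotheses in the theorem). *)

Section MBD.
Variables (T : finType) (e : rel T).

Definition cnbhd (v : T) : {set T} := [set u | (u == v) || e v u].

Definition staller_won (D S : {set T}) : bool :=
  [exists v in ~: D, cnbhd v \subset S].

(* Game value with n moves remaining; S = Staller's vertices,
   Dm = Dominator's vertices, st = true iff Staller is to move.
   Returns true iff Staller wins under optimal play. *)
Fixpoint staller_wins_from (D : {set T}) (n : nat) (S Dm : {set T}) (st : bool)
  : bool :=
  match n with
  | 0 => staller_won D S
  | n'.+1 =>
      if st then [exists v in ~: (S :|: Dm), staller_wins_from D n' (v |: S) Dm false]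
      else [forall v in ~: (S :|: Dm), staller_wins_from D n' S (v |: Dm) true]
  end.

(* MBD game on (G,D), Staller starts, all #|T| vertices get claimed. *)
Definition staller_wins_MBD (D : {set T}) : bool :=
  staller_wins_from D #|T| set0 set0 true.

Definition dominator_wins_MBD (D : {set T}) : bool := ~~ staller_wins_MBD D.

Definition MBD_dominator_critical (D : {set T}) : Prop :=
  [/\ D != set0, dominator_wins_MBD D &
      forall v, v \in D -> staller_wins_MBD (D :\ v)].

End MBD.

From mathcomp Require Import all_boot.

(* Enlarging D only removes targets for Staller, so her winning is antitone
   in D and the Dominator-winning sets form an up-closed family.  A critical
   set is exactly a minimal member of this family, which gives (i).  For (ii),
   V(G) is Dominator-winning since Staller has no target at all, so a member of
   least cardinality exists; it is critical, and it is nonempty precisely when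
   Staller wins on the empty set. *)

Set Implicit Arguments.
Unset Strict Implicit.
Unset Printing Implicit Defensive.

Section MBDMonotonicity.
Variables (T : finType) (e : rel T).

Lemma staller_won_antimono (D D' S : {set T}) :
  D \subset D' -> staller_won e D' S -> staller_won e D S.
Proof.
move=> sDD' /existsP[v /andP[vD' NvS]]; apply/existsP; exists v.
by rewrite NvS andbT; move: vD'; rewrite !inE; apply: contra; apply: (subsetP sDD').
Qed.

Lemma staller_wins_from_antimono (D D' : {set T}) n S Dm st :
  D \subset D' -> staller_wins_from e D' n S Dm st ->
  staller_wins_from e D n S Dm st.
Proof.
move=> sDD'; elim: n S Dm st => [|n IHn] S Dm [] /=.
- exact: staller_won_antimono.
- exact: staller_won_antimono.
- case/existsP=> v /andP[v_free win]; apply/existsP; exists v.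
  by rewrite v_free (IHn _ _ _ win).
- move/forallP=> win; apply/forallP=> v; apply/implyP=> v_free.
  by apply: IHn; move/implyP: (win v); apply.
Qed.

Lemma staller_wins_MBD_antimono (D D' : {set T}) :
  D \subset D' -> staller_wins_MBD e D' -> staller_wins_MBD e D.
Proof. exact: staller_wins_from_antimono. Qed.

(* The counting hypothesis guarantees an unclaimed vertex at every
   Dominator turn; otherwise his universal quantifier would be vacuous. *)
Lemma staller_loses_from_setT n (S Dm : {set T}) st :
  #|S :|: Dm| + n <= #|T| -> ~~ staller_wins_from e setT n S Dm st.
Proof.
elim: n S Dm st => [|n IHn] S Dm st count /=.
  by apply/existsP=> -[v]; rewrite setCT in_set0.
have claim_count v : v \in ~: (S :|: Dm) -> #|(v |: S) :|: Dm| + n <= #|T|.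
  by rewrite inE => v_free; rewrite -setUA cardsU1 v_free add1n addSn -addnS.
case: st.
  apply/existsP=> -[v /andP[v_free]]; apply/negP.
  exact: IHn (claim_count v v_free).
have [v v_free] : exists v, v \in ~: (S :|: Dm).
  apply/set0Pn; rewrite -card_gt0 cardsCs setCK subn_gt0.
  by apply: leq_ltn_trans (leq_addr n _) _; rewrite -addnS.
apply/forallP=> /(_ v); rewrite v_free /=; apply/negP; apply: IHn.
by rewrite setUCA setUA; apply: claim_count.
Qed.

Lemma dominator_wins_MBD_setT : dominator_wins_MBD e setT.
Proof. by apply: staller_loses_from_setT; rewrite setU0 cards0. Qed.

Lemma staller_wins_proper_critical (D D' : {set T}) :
  MBD_dominator_critical e D -> D' \proper D -> staller_wins_MBD e D'.
Proof.
case=> _ _ crit /properP[sD'D [v vD vD']]; apply: staller_wins_MBD_antimono (crit v vD).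
by apply/subsetP=> x xD'; rewrite !inE (subsetP sD'D _ xD') andbT; apply: contraNneq vD' => <-.
Qed.

Lemma staller_wins_set0_critical (D : {set T}) :
  MBD_dominator_critical e D -> staller_wins_MBD e set0.
Proof.
by move=> critD; apply: (staller_wins_proper_critical critD); rewrite proper0; case: critD.
Qed.

Lemma exists_critical_of_staller_wins_set0 :
  staller_wins_MBD e set0 -> exists D, MBD_dominator_critical e D.
Proof.
move=> win0.
have [D domD minD] := arg_minnP (fun D : {set T} => #|D|) dominator_wins_MBD_setT.
exists D; split=> // [|v vD].
  by apply: contraTneq win0 => D0; rewrite -D0.
by apply/negPn/negP=> /minD; rewrite (cardsD1 v D) vD ltnn.
Qed.

End MBDMonotonicity.

Theorem mainTheorem13 (T : finType) (e : rel T)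
    (e_sym : symmetric e) (e_irr : irreflexive e) :
  (forall D D' : {set T},
      MBD_dominator_critical e D ->
      (D' \proper D \/ D \proper D') ->
      ~ MBD_dominator_critical e D') /\
  ((exists D : {set T}, MBD_dominator_critical e D) <->
     staller_wins_MBD e set0).
Proof.
split=> [D D' critD [properD'D | properDD'] critD'|].
- by case: critD' => _ /negP[]; apply: staller_wins_proper_critical critD properD'D.
- by case: (critD) => _ /negP[]; apply: staller_wins_proper_critical critD' properDD'.
split=> [[D critD] | win0].
- exact: staller_wins_set0_critical critD.
- exact: exists_critical_of_staller_wins_set0.
Qed.
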